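(* Let $G$ be a finite, simple, connected plane graph of minimum degree $3$ in which no two distinct triangles (cycles of length $3$) share an edge. Let $f$ be the number of faces of $G$ and $f_3$ the number of triangular faces of $G$ (faces whose boundary is a cycle of length $3$). Then $f_3 < \tfrac{2}{3} f$.
   Context: A plane graph is a planar graph together with a fixed embedding in the plane; its faces are the connected components of the complement of the embedding in the plane (including the unbounded face). *)

(* A finite connected plane graph is represented by its
   combinatorial map (rotation system): a finite set of darts D (half-edges),
   a fixed-point-free involution [a] (the other half of the same edge) and a
   permutation [s] (the cyclic order of darts around their vertex, given by
   the embedding).  Vertices = s-orbits, edges = a-orbits, faces = orbits of
   the face permutation [s \o a].  The map is planar (genus 0) iff it is
   connected and satisfies Euler's formula V - E + F = 2. *)
From mathcomp Require Import all_boot.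
Set Implicit Arguments. Unset Strict Implicit. Unset Printing Implicit Defensive.

Section PlaneMap.
Variables (D : finType) (a s : D -> D).

Definition face_perm : D -> D := fun d => s (a d).

Definition map_step : rel D := fun x y => (y == a x) || (y == s x).

Definition same_vertex (x y : D) : bool := fconnect s x y.

Definition n_vertices : nat := fcard s D.
Definition n_edges : nat := fcard a D.
Definition n_faces : nat := fcard face_perm D.

Definition plane_map : Prop :=
  [/\ injective s,
      (forall d, a (a d) = d),
      (forall d, a d != d),
      (forall x y, connect map_step x y) &
      n_vertices + n_faces = n_edges + 2].

(* the underlying graph is simple: no loops, no multiple edges *)
Definition simple_map : Prop :=
  (forall d, ~~ same_vertex d (a d)) /\
  (forall d e, same_vertex d e -> same_vertex (a d) (a e) -> d = e).

(* degree of the vertex carrying dart d (number of darts at it; no loops) *)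
Definition degree (d : D) : nat := order s d.

Definition min_degree3 : Prop :=
  (forall d, 3 <= degree d) /\ (exists d, degree d = 3).

Definition adj (x y : D) : Prop :=
  exists d, same_vertex x d /\ same_vertex y (a d).

(* no two distinct triangles share an edge: if xyz and xyw are triangles
   sharing the edge xy then z and w are the same vertex *)
Definition no_edge_sharing_triangles : Prop :=
  forall x y z w, adj x y -> adj y z -> adj z x -> adj y w -> adj w x ->
    same_vertex z w.

(* number of triangular faces: faces whose boundary walk has length 3 (in a
   simple graph this boundary is a 3-cycle) *)
Definition n_tri_faces : nat :=
  fcard face_perm [pred d | order face_perm d == 3].

End PlaneMap.

From mathcomp Require Import all_boot zify.
Set Implicit Arguments. Unset Strict Implicit. Unset Printing Implicit Defensive.

(* Count darts.  A dart is triangular when its face is a triangle; then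
   3 f_3 darts are triangular and the 2E darts split into triangular and
   non-triangular ones.  Two consecutive darts d, s d around a vertex cannot
   both be triangular: their faces are triangles sharing the edge of d, so by
   the hypothesis their third vertices coincide, and simplicity then forces
   the vertex of d to have degree 2.  Hence s maps triangular darts injectively
   to non-triangular darts of the same vertex, and a vertex of degree >= 3 has
   at least 2 non-triangular darts.  So 3 f_3 <= 2E - 2V = 2F - 4 by Euler. *)

Section OrbitCounting.
Variables (T : finType) (f : T -> T).
Hypothesis f_inj : injective f.

Lemma fcard_order_eq n :
  fcard f [pred x | order f x == n] * n = #|[pred x | order f x == n]|.
Proof.
apply: (fcard_order_set f_inj); first exact/subsetP.
move=> x y /eqP <-; rewrite !inE.
suff -> : order f (f x) = order f x by [].
by apply: eq_card => z; exact: (esym (same_fconnect1 f_inj x z)).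
Qed.

Variable P : pred T.
Hypothesis P_step : forall x, P x -> ~~ P (f x).

Lemma order_le_double_predC x :
  order f x <= 2 * #|[predI fconnect f x & predC P]|.
Proof.
set O := fconnect f x.
have O_f y : O y -> O (f y) by move=> Oy; apply: connect_trans Oy (fconnect1 f y).
have card_P_le_predC : #|[predI O & P]| <= #|[predI O & predC P]|.
  rewrite -(card_image f_inj); apply/subset_leq_card/subsetP => z /imageP[y].
  by rewrite !inE => /andP[Oy Py] ->; rewrite O_f // P_step.
have card_orbit : #|[predI O & P]| + #|[predI O & predC P]| = order f x.
  by rewrite /order -(cardID P O); congr (_ + _); apply: eq_card => y;
     rewrite !inE andbC.
lia.
Qed.

Lemma two_fcard_le_card_predC :
  (forall x, 3 <= order f x) -> 2 * fcard f T <= #|predC P|.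
Proof.
move=> order_ge3.
rewrite -sum1_card (partition_big (froot f) (froots f)); last first.
  by move=> x _; apply: (roots_root (fconnect_sym f_inj)).
apply: (@leq_trans (\sum_(r | froots f r) 2)).
  rewrite sum_nat_const mulnC /n_comp_mem; apply: eq_leq; congr (_ * _).
  by apply: eq_card => x; rewrite !inE andbT.
apply: leq_sum => r /eqP root_r; rewrite sum1_card.
have := order_le_double_predC r; have := order_ge3 r.
suff -> : #|[pred y | predC P y && (froot f y == r)]| =
          #|[predI fconnect f r & predC P]| by lia.
apply: eq_card => y; rewrite !inE andbC fconnect_sym //.
by rewrite -(root_connect (fconnect_sym f_inj)) root_r.
Qed.

End OrbitCounting.

Lemma card_fpf_involution (T : finType) (f : T -> T) :
  involutive f -> (forall x, f x != x) -> #|T| = 2 * fcard f T.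
Proof.
move=> f_invol f_fpf; have f_inj := inv_inj f_invol.
have order2 x : order f x = 2.
  rewrite (@order_cycle _ _ [:: x; f x]) //=.
  - by rewrite f_invol !eqxx.
  - by rewrite inE eq_sym f_fpf.
  - by rewrite inE eqxx.
have all_order2 : [pred x | order f x == 2] =i T by move=> x; rewrite !inE order2.
rewrite mulnC -(eq_card all_order2) -fcard_order_eq //.
by congr (_ * _); apply: eq_n_comp_r.
Qed.

Section PlaneMapTriangles.
Variables (D : finType) (a s : D -> D).
Hypotheses (s_inj : injective s) (a_invol : involutive a).

Local Notation p := (face_perm a s).
Local Notation same_vertex := (same_vertex s).
Local Notation adj := (adj a s).

Lemma face_perm_inj : injective p.
Proof. by move=> x y /s_inj; apply: (inv_inj a_invol). Qed.

Lemma same_vertex_sym x y : same_vertex x y -> same_vertex y x.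
Proof. by rewrite /same_vertex fconnect_sym. Qed.

Lemma same_vertex_face_perm x : same_vertex (a x) (p x).
Proof. exact: fconnect1. Qed.

Lemma adj_sym x y : adj x y -> adj y x.
Proof. by case=> d [xd yad]; exists (a d); rewrite a_invol. Qed.

Lemma adj_same_vertex x x' y y' :
  same_vertex x x' -> same_vertex y y' -> adj x y -> adj x' y'.
Proof.
move=> xx' yy' [d [xd yad]]; exists d.
by split; [exact: connect_trans (same_vertex_sym xx') xd |
           exact: connect_trans (same_vertex_sym yy') yad].
Qed.

Lemma triangle_face_cycle c : order p c = 3 -> p (p (p c)) = c.
Proof. by move=> tri; have := iter_order face_perm_inj c; rewrite tri. Qed.

Lemma triangle_face_adj c : order p c = 3 ->
  [/\ adj c (a c), adj (a c) (a (p c)) & adj (a (p c)) c].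
Proof.
move=> /triangle_face_cycle cycle3; split.
- by exists c; split; apply: connect0.
- by exists (p c); split; [apply: same_vertex_face_perm | apply: connect0].
- exists (p (p c)); split; first exact: same_vertex_face_perm.
  by apply: same_vertex_sym; rewrite -{2}cycle3; apply: same_vertex_face_perm.
Qed.

Hypothesis simple : forall d e, same_vertex d e -> same_vertex (a d) (a e) -> d = e.
Hypothesis degree_ge3 : forall d, 3 <= order s d.
Hypothesis no_shared : no_edge_sharing_triangles a s.

Lemma triangular_face_step d : order p d = 3 -> order p (s d) != 3.
Proof.
move=> tri_d; apply/negP => /eqP tri_e; set e := s d in tri_e.
have d_cycle := triangle_face_cycle tri_d.
have e2_ad : p (p e) = a d.
  rewrite -[p (p e)]a_invol; congr a; apply: s_inj.
  exact: triangle_face_cycle tri_e.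
(* The faces of d and of e are triangles on the edge (d, a d), with third
   vertices a (p d) and a e respectively. *)
have [adj_d_ad adj_ad_z adj_z_d] := triangle_face_adj tri_d.
have [adj_e_ae adj_ae_e1 _] := triangle_face_adj tri_e.
have e_d : same_vertex e d by apply/same_vertex_sym/fconnect1.
have third_vertex_eq : same_vertex (a (p d)) (a e).
  apply: (no_shared adj_d_ad adj_ad_z adj_z_d).
  - apply: adj_same_vertex (connect0 _ _) (adj_sym adj_ae_e1).
    by rewrite -e2_ad; apply: same_vertex_face_perm.
  - exact: adj_same_vertex (connect0 _ _) e_d (adj_sym adj_e_ae).
have e_ad2 : e = a (p (p d)).
  (* both darts join the vertex of d to the common third vertex *)
  apply: simple.
    apply: connect_trans e_d _; apply: same_vertex_sym.
    by rewrite -{2}d_cycle; apply: same_vertex_face_perm.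
  rewrite a_invol; apply: connect_trans (same_vertex_sym third_vertex_eq) _.
  exact: same_vertex_face_perm.
have ss_d : s (s d) = d by rewrite -/e e_ad2 -{2}d_cycle.
have order_le2 : order s d <= 2.
  apply: (@order_le_cycle _ _ [:: d; s d]); last by rewrite inE eqxx.
  by rewrite /= ss_d !eqxx.
by move: (degree_ge3 d); rewrite ltnNge order_le2.
Qed.

Lemma two_vertices_le_nontriangular :
  2 * n_vertices s <= #|[pred d | order p d != 3]|.
Proof.
have step d : order p d == 3 -> order p (s d) != 3.
  by move/eqP; apply: triangular_face_step.
apply: leq_trans (two_fcard_le_card_predC s_inj step degree_ge3) _.
by apply/eq_leq/eq_card => d; rewrite !inE.
Qed.

End PlaneMapTriangles.

Theorem theorem4 (D : finType) (a s : D -> D) :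
  plane_map a s -> simple_map a s -> min_degree3 s ->
  no_edge_sharing_triangles a s ->
  3 * n_tri_faces a s < 2 * n_faces a s.
Proof.
move=> [s_inj a_invol a_fpf _ euler] [_ simple] [degree_ge3 _] no_shared.
set tri := [pred d | order (face_perm a s) d == 3].
have tri_darts : n_tri_faces a s * 3 = #|tri|.
  exact: fcard_order_eq (face_perm_inj s_inj a_invol) 3.
have edge_darts : #|D| = 2 * n_edges a := card_fpf_involution a_invol a_fpf.
have vertex_darts := two_vertices_le_nontriangular s_inj a_invol simple degree_ge3 no_shared.
have tri_split : #|tri| + #|[pred d | order (face_perm a s) d != 3]| = #|D|.
  by rewrite -(cardC tri).
lia.
Qed.
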